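(* Let $R$ be a non-unital, non-associative ring, let $\sigma,\delta\colon R\to R$ be left $R$-additive maps, and let $\gamma$ be a ring endomorphism of $R$. Extend $\gamma$ homogeneously to $R[X;\sigma,\delta]$. Then this extended map is a ring endomorphism of $R[X;\sigma,\delta]$ if and only if $$\gamma(a)\cdot\pi_i^m(\gamma(b))=\gamma(a)\cdot\gamma(\pi_i^m(b))\quad\text{for all } i,m\in\mathbb{N}\text{ and } a,b\in R.$$
   Context: ''Non-associative'' means not necessarily associative and ''non-unital'' means not necessarily unital. $\mathbb{N}$ denotes the non-negative integers. A map $\beta\colon R\to R$ is left $R$-additive if $r\cdot\beta(s+t)=r\cdot(\beta(s)+\beta(t))$ for all $r,s,t\in R$. For $m\in\mathbb{N}$ and $0\le i\le m$, $\pi_i^m\colon R\to R$ denotes the sum of all $\binom{m}{i}$ compositions of $i$ copies of $\sigma$ and $m-i$ copies of $\delta$ in arbitrary order (so $\pi_0^0=\mathrm{id}_R$, e.g. $\pi_1^3=\sigma\delta\delta+\delta\sigma\delta+\delta\delta\sigma$), and $\pi_i^m:=0$ if $i<0$ or $i>m$. The non-unital, non-associative Ore extension $R[X;\sigma,\delta]$ is the set of formal sums $\sum_{i\in\mathbb{N}}a_iX^i$ with $a_i\in R$, finitely many nonzero, with coefficientwise addition and the distributive multiplication determined by $aX^m\cdot bX^n=\sum_{i\in\mathbb{N}}(a\cdot\pi_i^m(b))X^{i+n}$ for $a,b\in R$, $m,n\in\mathbb{N}$. $R$ is identified with $RX^0$. An additive map $\gamma\colon R\to R$ is extended homogeneously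 to $R[X;\sigma,\delta]$ by $\gamma\left(\sum_i a_iX^i\right):=\sum_i\gamma(a_i)X^i$. *)

(* A non-unital, non-associative ring is modelled as an
   abelian group R : zmodType with a biadditive multiplication mul. *)
From HB Require Import structures.
From mathcomp Require Import all_boot all_order all_algebra.
Set Implicit Arguments. Unset Strict Implicit. Unset Printing Implicit Defensive.
Import GRing.Theory.
Local Open Scope ring_scope.

Section Ore.
Variable R : zmodType.
Variable mul : R -> R -> R.
Variables sigma delta : R -> R.

(* opi m i b = sum over all words in {sigma,delta} of length m with exactly i
   letters sigma, of the corresponding composition applied to b
   (true = sigma, false = delta); empty sum (= 0) when i > m. *)
Definition word_map (w : seq bool) : R -> R :=
  foldr (fun (c : bool) (f : R -> R) => fun x => (if c then sigma else delta) (f x)) id w.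

Definition opi (m i : nat) (b : R) : R :=
  \sum_(w : m.-tuple bool | count id w == i) word_map w b.

(* Elements of R[X;sigma,delta]: coefficient lists (a_0; a_1; ...), with
   finitely many nonzero coefficients; equality is compared coefficientwise
   (via ocoef), so trailing zeros are irrelevant. *)
Definition opoly := seq R.
Definition ocoef (p : opoly) (k : nat) : R := nth 0 p k.

Definition oadd (p q : opoly) : opoly :=
  mkseq (fun k => ocoef p k + ocoef q k) (maxn (size p) (size q)).

(* (sum_m a_m X^m)(sum_n b_n X^n) = sum_{m,n} sum_i (a_m . pi_i^m(b_n)) X^(i+n) *)
Definition omul (p q : opoly) : opoly :=
  mkseq (fun k => \sum_(m < size p) \sum_(n < size q) \sum_(i < m.+1 | (i + n)%N == k)
                    mul (ocoef p m) (opi m i (ocoef q n)))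
        (size p + size q).

End Ore.

Definition oext (R : zmodType) (g : R -> R) (p : opoly R) : opoly R := map g p.

Definition left_R_additive (R : zmodType) (mul : R -> R -> R) (f : R -> R) :=
  forall r s t : R, mul r (f (s + t)) = mul r (f s + f t).

Definition ring_endo (R : zmodType) (mul : R -> R -> R) (g : R -> R) :=
  (forall x y, g (x + y) = g x + g y) /\ (forall x y, g (mul x y) = mul (g x) (g y)).

Definition ore_endo (R : zmodType) (mul : R -> R -> R) (s d : R -> R) (G : opoly R -> opoly R) :=
  (forall p q, ocoef (G (oadd p q)) =1 ocoef (oadd (G p) (G q))) /\
  (forall p q, ocoef (G (omul mul s d p q)) =1 ocoef (omul mul s d (G p) (G q))).

(* The k-th
   coefficient of a product is a finite sum of terms a_m . pi_i^m(b_n), so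
   gamma commutes with the product as soon as it does with each such term;
   conversely, the product of the monomials aX^m and b has exactly
   a . pi_i^m(b) as its i-th coefficient. *)
From HB Require Import structures.
From mathcomp Require Import all_boot all_order all_algebra.
Set Implicit Arguments. Unset Strict Implicit. Unset Printing Implicit Defensive.
Import GRing.Theory.
Local Open Scope ring_scope.

Definition omonomial (R : zmodType) (a : R) (m : nat) : opoly R :=
  rcons (nseq m 0) a.

Section OreCoefficients.
Variable R : zmodType.
Variable mul : R -> R -> R.
Variables sigma delta : R -> R.

Lemma ocoef_mkseq (f : nat -> R) n k :
  ocoef (mkseq f n) k = if (k < n)%N then f k else 0.
Proof.
rewrite /ocoef; case: ifP => hk; first by rewrite nth_mkseq.
by rewrite nth_default // size_mkseq leqNgt hk.
Qed.

Lemma ocoef_oadd (p q : opoly R) k : ocoef (oadd p q) k = ocoef p k + ocoef q k.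
Proof.
rewrite ocoef_mkseq; case: ltnP => // hk.
by rewrite /ocoef !nth_default ?addr0 // (leq_trans _ hk) // leq_max leqnn ?orbT.
Qed.

Lemma opi_eq0 m i (b : R) : (m < i)%N -> opi sigma delta m i b = 0.
Proof.
move=> lt_mi; rewrite /opi big_pred0 // => w; apply/negbTE/eqP => cnt_w.
by have := count_size id w; rewrite cnt_w size_tuple leqNgt lt_mi.
Qed.

(* The truncation of [omul] at [size p + size q] only drops empty sums. *)
Lemma ocoef_omul (p q : opoly R) k :
  ocoef (omul mul sigma delta p q) k =
  \sum_(m < size p) \sum_(n < size q) \sum_(i < m.+1 | (i + n)%N == k)
    mul (ocoef p m) (opi sigma delta m i (ocoef q n)).
Proof.
rewrite ocoef_mkseq; case: ltnP => // hk.
apply/esym/big1 => m _; apply: big1 => n _; apply: big_pred0 => i.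
apply/negbTE/eqP => def_k.
have lt_ip : (i < size p)%N := leq_trans (ltn_ord i) (ltn_ord m).
by rewrite -def_k leqNgt -addSn leq_add // ltnW in hk.
Qed.

Lemma ocoef_omonomial (a : R) m k :
  ocoef (omonomial a m) k = if k == m then a else 0.
Proof.
rewrite /ocoef nth_rcons size_nseq nth_nseq if_same.
by case: ltngtP.
Qed.

Hypothesis mulDl : forall x y z : R, mul (x + y) z = mul x z + mul y z.
Hypothesis mulDr : forall x y z : R, mul x (y + z) = mul x y + mul x z.

Lemma mul0x x : mul 0 x = 0.
Proof. by apply: (addrI (mul 0 x)); rewrite -mulDl !addr0. Qed.

Lemma mulx0 x : mul x 0 = 0.
Proof. by apply: (addrI (mul x 0)); rewrite -mulDr !addr0. Qed.

Lemma ocoef_omul_monomial (a b : R) m i :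
  ocoef (omul mul sigma delta (omonomial a m) [:: b]) i =
  mul a (opi sigma delta m i b).
Proof.
rewrite ocoef_omul size_rcons size_nseq big_ord_recr /= big1 => [|j _]; last first.
  rewrite big1 // => n _; rewrite big1 // => l _.
  by rewrite ocoef_omonomial (ltn_eqF (ltn_ord j)) mul0x.
rewrite add0r big_ord1 ocoef_omonomial eqxx.
under eq_bigl do rewrite addn0.
case: (ltnP m i) => [lt_mi | le_im].
  rewrite opi_eq0 // mulx0 big_pred0 // => j; apply/negbTE/eqP => def_i.
  by move: lt_mi; rewrite -def_i ltnNge -ltnS ltn_ord.
by rewrite (big_pred1 (Ordinal (le_im : (i < m.+1)%N))).
Qed.

End OreCoefficients.

Section HomogeneousExtension.
Variable R : zmodType.
Variable gamma : R -> R.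
Hypothesis gammaD : forall x y, gamma (x + y) = gamma x + gamma y.

Lemma gamma0 : gamma 0 = 0.
Proof. by apply: (addrI (gamma 0)); rewrite -gammaD !addr0. Qed.

Lemma ocoef_oext (p : opoly R) k : ocoef (oext gamma p) k = gamma (ocoef p k).
Proof.
rewrite /ocoef /oext; case: (ltnP k (size p)) => hk; first by rewrite (nth_map 0).
by rewrite !nth_default ?size_map ?gamma0.
Qed.

Lemma oext_omonomial (a : R) m : oext gamma (omonomial a m) = omonomial (gamma a) m.
Proof. by rewrite /oext /omonomial map_rcons map_nseq gamma0. Qed.

Lemma oext_oadd (p q : opoly R) :
  ocoef (oext gamma (oadd p q)) =1 ocoef (oadd (oext gamma p) (oext gamma q)).
Proof. by move=> k; rewrite ocoef_oext !ocoef_oadd gammaD !ocoef_oext. Qed.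

Variables (mul : R -> R -> R) (sigma delta : R -> R).
Hypothesis gammaM : forall x y, gamma (mul x y) = mul (gamma x) (gamma y).

Lemma oext_omul :
  (forall i m a b, mul (gamma a) (opi sigma delta m i (gamma b)) =
                   mul (gamma a) (gamma (opi sigma delta m i b))) ->
  forall p q : opoly R, ocoef (oext gamma (omul mul sigma delta p q)) =1
                        ocoef (omul mul sigma delta (oext gamma p) (oext gamma q)).
Proof.
move=> gamma_opi p q k; rewrite ocoef_oext !ocoef_omul !size_map.
rewrite (big_morph gamma gammaD gamma0); apply: eq_bigr => m _.
rewrite (big_morph gamma gammaD gamma0); apply: eq_bigr => n _.
rewrite (big_morph gamma gammaD gamma0); apply: eq_bigr => i _.
by rewrite !ocoef_oext gammaM gamma_opi.
Qed.

Hypothesis mulDl : forall x y z : R, mul (x + y) z = mul x z + mul y z.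
Hypothesis mulDr : forall x y z : R, mul x (y + z) = mul x y + mul x z.

Lemma gamma_opi_of_oext_omul :
  (forall p q : opoly R, ocoef (oext gamma (omul mul sigma delta p q)) =1
                         ocoef (omul mul sigma delta (oext gamma p) (oext gamma q))) ->
  forall i m a b, mul (gamma a) (opi sigma delta m i (gamma b)) =
                  mul (gamma a) (gamma (opi sigma delta m i b)).
Proof.
move=> oextM i m a b; have := oextM (omonomial a m) [:: b] i.
by rewrite ocoef_oext oext_omonomial !ocoef_omul_monomial // gammaM => ->.
Qed.

End HomogeneousExtension.

Theorem mainTheorem1 (R : zmodType) (mul : R -> R -> R)
  (mulDl : forall x y z : R, mul (x + y) z = mul x z + mul y z)
  (mulDr : forall x y z : R, mul x (y + z) = mul x y + mul x z)
  (sigma delta gamma : R -> R)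
  (hs : left_R_additive mul sigma) (hd : left_R_additive mul delta)
  (hg : ring_endo mul gamma) :
  ore_endo mul sigma delta (oext gamma) <->
  (forall (i m : nat) (a b : R),
     mul (gamma a) (opi sigma delta m i (gamma b)) = mul (gamma a) (gamma (opi sigma delta m i b))).
Proof.
case: hg => gammaD gammaM; split.
- by case=> _ oextM; apply: gamma_opi_of_oext_omul.
- by move=> gamma_opi; split; [apply: oext_oadd | apply: oext_omul].
Qed.
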